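(* Let $\kappa\le\lambda<0$ and nonnegative progress values be given, and consider the sequential game $(A^{s},B^{s})$ and the cooperative game $(A^{c},B^{c})$ defined in the context. Suppose that $\max_{i\in\Gamma^1}a^{s}_i>\kappa$ and that there exists $j\in\Gamma^2$ with $b_{i',j}>\lambda$ for every $i'\in\arg\max_{i\in\Gamma^1}a^{s}_i$. Let $\Pi_{s}$ be the set of pairs $(i,j)$ with $i\in\arg\max_{i'\in\Gamma^1}a^{s}_{i'}$ and $j\in\arg\max_{j'\in\Gamma^2}b_{i,j'}$ (equivalently, the set of Nash, and also of Stackelberg, equilibria of the sequential game); let $\Pi_{st}$ be the set of Stackelberg equilibria (P1 leader) of the cooperative game; let $\Pi_{n}$ be the set of Nash equilibria of the cooperative game; and let $\Pi_{n,RoR}$ be the set of those Nash equilibria of the cooperative game that maximize P1's payoff $a^{c}_{i,j}$ among all Nash equilibria of the cooperative game. Then $$\emptyset\neq\Pi_{s}=\Pi_{st}=\Pi_{n,RoR}\subseteq\Pi_{n},$$ and every pair in $\Pi_s$ is feasible.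
   Context: Abstract two-player racing set-up. Player 1 (P1, the leader) chooses a trajectory $i\in\Gamma^1=\{1,\dots,n\}$, player 2 (P2) chooses $j\in\Gamma^2=\{1,\dots,m\}$. Each trajectory has a progress value $P^1_i\ge 0$ (resp. $P^2_j\ge 0$). Each trajectory is either on track or off track, and each pair $(i,j)$ either collides or not. A pair $(i,j)$ is feasible if $i$ and $j$ are both on track and $(i,j)$ does not collide. Constants $\kappa\le\lambda<0$ are fixed. Sequential game: P1's payoff does not depend on $j$: $a^{s}_{i,j}=a^{s}_i=\kappa$ if $i$ is off track, and $a^{s}_i=P^1_i$ otherwise. P2's payoff: $b_{i,j}=\kappa$ if $j$ is off track; otherwise $b_{i,j}=\lambda$ if $(i,j)$ collides; otherwise $b_{i,j}=P^2_j$. Cooperative game: $a^{c}_{i,j}=\kappa$ if $i$ is off track; otherwise $\lambda$ if $(i,j)$ collides; otherwise $P^1_i$. P2's payoff is the same $b_{i,j}$ as in the sequential game. For a bimatrix game $(A,B)$: $R(i)=\arg\max_{j\in\Gamma^2}b_{i,j}$; $(i^*,j^* )$ is a Stackelberg equilibrium with P1 as leader if $i^*\in\arg\max_{i}\min_{j\in R(i)}a_{i,j}$ and $j^*\in R(i^* )$; $(i^*,j^* )$ is a Nash equilibrium if $a_{i^*,j^*}\ge a_{i,j^*}$ for all $i$ and $b_{i^*,j^*}\ge b_{i^*,j}$ for all $j$. Only pure strategies are considered. *)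

From HB Require Import structures.
From mathcomp Require Import all_boot all_order all_algebra.
Set Implicit Arguments. Unset Strict Implicit. Unset Printing Implicit Defensive.
Import Order.TTheory GRing.Theory Num.Theory.
Local Open Scope ring_scope.

Section Games.
Variable R : realFieldType.

Definition argmax (T : finType) (f : T -> R) : pred T :=
  [pred x | [forall y, f y <= f x]].

(* minimum of a (nonempty) list; value on [::] is irrelevant *)
Definition mins (s : seq R) : R :=
  match s with [::] => 0 | x :: s' => foldr Num.min x s' end.

Variables n m : nat.
Notation payoff := ('I_n -> 'I_m -> R).

Definition BR (B : payoff) (i : 'I_n) : pred 'I_m := argmax (B i).

Definition worst (A B : payoff) (i : 'I_n) : R :=
  mins [seq A i j | j <- enum (BR B i)].

Definition stackelberg (A B : payoff) (p : 'I_n * 'I_m) : bool :=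
  (p.1 \in argmax (worst A B)) && (p.2 \in BR B p.1).

Definition nash (A B : payoff) (p : 'I_n * 'I_m) : bool :=
  [forall i, A i p.2 <= A p.1 p.2] && [forall j, B p.1 j <= B p.1 p.2].

Variables (kappa lambda : R) (P1 : 'I_n -> R) (P2 : 'I_m -> R)
  (on1 : 'I_n -> bool) (on2 : 'I_m -> bool) (coll : 'I_n -> 'I_m -> bool).

Definition feasible (p : 'I_n * 'I_m) : bool :=
  [&& on1 p.1, on2 p.2 & ~~ coll p.1 p.2].

Definition aseq (i : 'I_n) : R := if on1 i then P1 i else kappa.
Definition Aseq : payoff := fun i _ => aseq i.
Definition Acoop : payoff := fun i j =>
  if ~~ on1 i then kappa else if coll i j then lambda else P1 i.
Definition Bpay : payoff := fun i j =>
  if ~~ on2 j then kappa else if coll i j then lambda else P2 j.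

Definition Pi_s : {set 'I_n * 'I_m} :=
  [set p | (p.1 \in argmax aseq) && (p.2 \in argmax (Bpay p.1))].
Definition Pi_st : {set 'I_n * 'I_m} := [set p | stackelberg Acoop Bpay p].
Definition Pi_n : {set 'I_n * 'I_m} := [set p | nash Acoop Bpay p].
Definition Pi_nRoR : {set 'I_n * 'I_m} :=
  [set p in Pi_n | [forall q in Pi_n, Acoop q.1 q.2 <= Acoop p.1 p.2]].
End Games.

(* A cooperative payoff never exceeds the sequential one, and the two coincide
   on feasible pairs.  The hypothesis on j forces every best response of P2 to
   a maximizer i of the sequential payoff to be feasible, so P1 obtains exactly
   max a^s there; hence P1's guaranteed value in the cooperative game equals
   max a^s on the maximizers and is strictly smaller elsewhere.  This identifies
   the Stackelberg equilibria, and since every Nash equilibrium of the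
   cooperative game gives P1 at most max a^s, which the pairs of Pi_s attain,
   also the payoff-maximal Nash equilibria. *)
From HB Require Import structures.
From mathcomp Require Import all_boot all_order all_algebra.
Import Order.TTheory GRing.Theory Num.Theory.
Set Implicit Arguments. Unset Strict Implicit. Unset Printing Implicit Defensive.
Local Open Scope ring_scope.

Section ArgmaxMins.
Variable R : realFieldType.

Lemma argmax_nonempty (T : finType) (f : T -> R) (t : T) :
  exists x, x \in argmax f.
Proof.
case: (@arg_maxP _ R T t predT f isT) => x _ x_max.
by exists x; apply/forallP => y; exact: x_max.
Qed.

Lemma argmax_eq (T : finType) (f : T -> R) x y :
  x \in argmax f -> y \in argmax f -> f x = f y.
Proof. by move=> /forallP xM /forallP yM; apply/eqP; rewrite eq_le xM yM. Qed.

Lemma mins_le (s : seq R) y : y \in s -> mins s <= y.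
Proof.
case: s => [//|x s] /=.
elim: s x y => [|a s IH] x y /=; first by rewrite inE => /eqP ->.
rewrite !inE => /orP [/eqP ->|/orP [/eqP ->|ys]].
- by rewrite ge_min (IH x x) ?inE ?eqxx ?orbT.
- by rewrite ge_min lexx.
- by rewrite ge_min (IH x y) ?inE ?ys ?orbT.
Qed.

Lemma mem_mins (s : seq R) : s != [::] -> mins s \in s.
Proof.
case: s => [//|x s] _ /=.
elim: s x => [|a s IH] x /=; first by rewrite inE.
have := IH x; rewrite !inE /Order.min; case: ifP => _; first by rewrite eqxx orbT.
by case/orP => ->; rewrite ?orbT.
Qed.

Variables n m : nat.
Implicit Types (A B : 'I_n -> 'I_m -> R) (i : 'I_n) (j : 'I_m).

Lemma worst_le A B i j : j \in BR B i -> worst A B i <= A i j.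
Proof. by move=> Bj; apply: mins_le; apply: map_f; rewrite mem_enum. Qed.

Lemma worst_attained A B i j :
  j \in BR B i -> exists2 j', j' \in BR B i & worst A B i = A i j'.
Proof.
move=> Bj; have: worst A B i \in [seq A i j | j <- enum (BR B i)].
  apply: mem_mins; apply/eqP => brE.
  have jE : j \in enum (BR B i) by rewrite mem_enum.
  by have := map_f (A i) jE; rewrite brE.
by case/mapP => j'; rewrite mem_enum; exists j'.
Qed.

End ArgmaxMins.

Section Racing.
Variables (R : realFieldType) (n m : nat) (kappa lambda : R).
Variables (P1 : 'I_n -> R) (P2 : 'I_m -> R).
Variables (on1 : 'I_n -> bool) (on2 : 'I_m -> bool) (coll : 'I_n -> 'I_m -> bool).

Local Notation a := (aseq kappa P1 on1).
Local Notation Ac := (Acoop kappa lambda P1 on1 coll).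
Local Notation B := (Bpay kappa lambda P2 on2 coll).
Local Notation feasible := (feasible on1 on2 coll).

Lemma Acoop_feasible i j : feasible (i, j) -> Ac i j = a i.
Proof. by case/and3P => /= oi _ nc; rewrite /Acoop /aseq oi (negbTE nc). Qed.

Hypothesis kappa_le_lambda : kappa <= lambda.
Hypothesis lambda_lt0 : lambda < 0.
Hypothesis P1_ge0 : forall i, 0 <= P1 i.

Lemma Acoop_le_aseq i j : Ac i j <= a i.
Proof.
rewrite /Acoop /aseq; case: (on1 i) => //=; case: (coll i j) => //.
exact: le_trans (ltW lambda_lt0) (P1_ge0 i).
Qed.

Variable i0 : 'I_n.
Hypothesis i0_max : i0 \in argmax a.
Hypothesis i0_on : kappa < a i0.
Variable j0 : 'I_m.
Hypothesis j0_safe : forall i, i \in argmax a -> lambda < B i j0.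

Lemma aseq_le_max i : a i <= a i0.
Proof. by move/forallP: i0_max. Qed.

Lemma Acoop_le_max i j : Ac i j <= a i0.
Proof. exact: le_trans (Acoop_le_aseq i j) (aseq_le_max i). Qed.

Lemma best_response_feasible i j :
  i \in argmax a -> j \in BR B i -> feasible (i, j).
Proof.
move=> iM /forallP jBR.
have oi : on1 i.
  apply: contraTT i0_on => /negbTE off.
  by rewrite -(argmax_eq iM i0_max) /aseq off ltxx.
have := lt_le_trans (j0_safe iM) (jBR j0); rewrite /Bpay.
case oj: (on2 j) => /=; last by rewrite ltNge kappa_le_lambda.
case cij: (coll i j); first by rewrite ltxx.
by rewrite /feasible /= oi oj cij.
Qed.

Lemma BR_nonempty i : exists j, j \in BR B i.
Proof. exact: argmax_nonempty j0. Qed.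

Lemma Acoop_best_response i j :
  i \in argmax a -> j \in BR B i -> Ac i j = a i0.
Proof.
move=> iM jBR; rewrite Acoop_feasible ?best_response_feasible //.
exact: argmax_eq iM i0_max.
Qed.

Lemma worst_argmax i : i \in argmax a -> worst Ac B i = a i0.
Proof.
move=> iM; have [j jBR] := BR_nonempty i.
by have [j' j'BR ->] := worst_attained Ac jBR; exact: Acoop_best_response.
Qed.

Lemma worst_not_argmax i : i \notin argmax a -> worst Ac B i < a i0.
Proof.
move=> /forallPn [y]; rewrite -ltNge => ai_lt.
have [j jBR] := BR_nonempty i.
apply: le_lt_trans (worst_le Ac jBR) _.
exact: le_lt_trans (Acoop_le_aseq i j) (lt_le_trans ai_lt (aseq_le_max y)).
Qed.

Lemma argmax_worst : argmax (worst Ac B) =i argmax a.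
Proof.
move=> i; have [iM|iNM] := boolP (i \in argmax a).
  apply/forallP => y; rewrite (worst_argmax iM).
  have [yM|yNM] := boolP (y \in argmax a); first by rewrite worst_argmax.
  exact: ltW (worst_not_argmax yNM).
apply/negP => /forallP /(_ i0); rewrite worst_argmax // leNgt.
by rewrite worst_not_argmax.
Qed.

Local Notation Ps := (Pi_s kappa lambda P1 P2 on1 on2 coll).
Local Notation Pn := (Pi_n kappa lambda P1 P2 on1 on2 coll).

Lemma mem_Pi_s p : (p \in Ps) = (p.1 \in argmax a) && (p.2 \in BR B p.1).
Proof. by rewrite inE. Qed.

Lemma Pi_s_stackelberg : Ps = Pi_st kappa lambda P1 P2 on1 on2 coll.
Proof. by apply/setP => p; rewrite mem_Pi_s [in RHS]inE /stackelberg argmax_worst. Qed.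

Lemma Pi_s_nash p : p \in Ps -> p \in Pn.
Proof.
case: p => i j; rewrite mem_Pi_s /= => /andP [iM jBR].
rewrite inE /nash /= (Acoop_best_response iM jBR).
apply/andP; split; last exact: jBR.
by apply/forallP => k; exact: Acoop_le_max.
Qed.

Lemma Pi_s_nash_RoR : Ps = Pi_nRoR kappa lambda P1 P2 on1 on2 coll.
Proof.
have [j1 j1BR] := BR_nonempty i0.
have i0j1 : (i0, j1) \in Ps by rewrite mem_Pi_s i0_max.
apply/setP => -[i j]; rewrite [in RHS]inE; apply/idP/idP.
  move=> ijPs; rewrite Pi_s_nash //=.
  move: ijPs; rewrite mem_Pi_s => /andP [iM jBR].
  rewrite (Acoop_best_response iM jBR).
  by apply/forallP => q; apply/implyP => _; exact: Acoop_le_max.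
case/andP => ijN /forallP /(_ (i0, j1)).
rewrite Pi_s_nash //= (Acoop_best_response i0_max j1BR) => max_le.
move: ijN; rewrite inE => /andP [_ jBR].
rewrite mem_Pi_s; apply/andP; split=> //; apply/forallP => y.
by rewrite (le_trans (aseq_le_max y)) // (le_trans max_le) // Acoop_le_aseq.
Qed.

End Racing.

Unset Implicit Arguments.

Theorem theorem1 (R : realFieldType) (n m : nat) (kappa lambda : R)
  (P1 : 'I_n -> R) (P2 : 'I_m -> R)
  (on1 : 'I_n -> bool) (on2 : 'I_m -> bool) (coll : 'I_n -> 'I_m -> bool)
  (hkl : kappa <= lambda) (hl : lambda < 0)
  (hP1 : forall i, 0 <= P1 i) (hP2 : forall j, 0 <= P2 j)
  (hmax : exists i, (i \in argmax (aseq kappa P1 on1)) /\ kappa < aseq kappa P1 on1 i)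
  (hj : exists j, forall i', i' \in argmax (aseq kappa P1 on1) ->
          lambda < Bpay kappa lambda P2 on2 coll i' j) :
  let Ps := Pi_s kappa lambda P1 P2 on1 on2 coll in
  let Pst := Pi_st kappa lambda P1 P2 on1 on2 coll in
  let Pn := Pi_n kappa lambda P1 P2 on1 on2 coll in
  let PnRoR := Pi_nRoR kappa lambda P1 P2 on1 on2 coll in
  [/\ Ps != set0, Ps = Pst, Pst = PnRoR, PnRoR \subset Pn &
      forall p, p \in Ps -> feasible on1 on2 coll p].
Proof.
move=> Ps Pst Pn PnRoR.
have [i0 [i0M i0_on]] := hmax; have [j0 j0_safe] := hj.
have PsPst := Pi_s_stackelberg hkl hl hP1 i0M i0_on j0_safe.
have PsRoR := Pi_s_nash_RoR hkl hl hP1 i0M i0_on j0_safe.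
have [j1 j1BR] := BR_nonempty kappa lambda P2 on2 coll j0 i0.
split.
- by apply/set0Pn; exists (i0, j1); rewrite mem_Pi_s i0M.
- exact: PsPst.
- exact: etrans (esym PsPst) PsRoR.
- by apply/subsetP => p; rewrite inE => /andP [].
- by move=> [i j]; rewrite mem_Pi_s => /andP [];
    exact: (best_response_feasible hkl i0M i0_on j0_safe).
Qed.
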